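(* Let $f=f(x_1,\ldots,x_n)$ be a positive canalyzing Boolean function with $k\ge 0$ relevant variables. Then $f$ has at least $k+1$ extremal points, and it has exactly $k+1$ extremal points if and only if $f$ is linear read-once.
   Context: $B=\{0,1\}$; $\preceq$ is the coordinatewise order on $B^n$. $f$ is positive if $f(\mathbf{x})=1$ and $\mathbf{x}\preceq\mathbf{y}$ imply $f(\mathbf{y})=1$. Extremal points are the $\preceq$-maximal false points (maximal zeros) and $\preceq$-minimal true points (minimal ones). $f_{|x_i=\alpha}$ denotes the function of the remaining $n-1$ variables obtained by fixing $x_i=\alpha$. A variable $x_i$ is relevant if $f_{|x_i=0}\not\equiv f_{|x_i=1}$. $f$ is canalyzing if for some $i$, $f_{|x_i=0}$ or $f_{|x_i=1}$ is a constant function. A function is linear read-once (lro) if it is constant or can be represented by a nested formula: the literals $x,\overline{x}$ are nested formulas, and $x\vee t$, $x\wedge t$, $\overline{x}\vee t$, $\overline{x}\wedge t$ are nested formulas whenever $t$ is a nested formula containing neither $x$ nor $\overline{x}$. *)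

From mathcomp Require Import all_boot.
Set Implicit Arguments. Unset Strict Implicit. Unset Printing Implicit Defensive.

Definition pt (n : nat) := {ffun 'I_n -> bool}.

Definition bleq n (x y : pt n) : bool := [forall i, x i ==> y i].

Definition positive n (f : pt n -> bool) : Prop :=
  forall x y : pt n, f x -> bleq x y -> f y.

Definition max_zero n (f : pt n -> bool) (x : pt n) : bool :=
  ~~ f x && [forall y : pt n, (bleq x y && (y != x)) ==> f y].
Definition min_one n (f : pt n -> bool) (x : pt n) : bool :=
  f x && [forall y : pt n, (bleq y x && (y != x)) ==> ~~ f y].

Definition extremal_points n (f : pt n -> bool) : {set pt n} :=
  [set x | max_zero f x || min_one f x].

Definition upd n (x : pt n) (i : 'I_n) (a : bool) : pt n :=
  [ffun j => if j == i then a else x j].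

(* f_{|x_i = a}, represented as a function on B^n not depending on x_i *)
Definition restrict n (f : pt n -> bool) (i : 'I_n) (a : bool) : pt n -> bool :=
  fun x => f (upd x i a).

Definition const_fun n (g : pt n -> bool) : Prop :=
  exists c : bool, forall x, g x = c.

Definition relevant n (f : pt n -> bool) (i : 'I_n) : bool :=
  [exists x : pt n, restrict f i false x != restrict f i true x].

Definition relevant_vars n (f : pt n -> bool) : {set 'I_n} :=
  [set i | relevant f i].

Definition canalyzing n (f : pt n -> bool) : Prop :=
  exists (i : 'I_n) (a : bool), const_fun (restrict f i a).

(* Nested formulas. A literal (i, b) is x_i if b = true and its negation if b = false. *)
Inductive nested (n : nat) : Type :=
  | NLit of 'I_n & bool
  | NOr  of 'I_n & bool & nested n
  | NAnd of 'I_n & bool & nested n.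

Definition lit n (i : 'I_n) (b : bool) (x : pt n) : bool :=
  if b then x i else ~~ x i.

Fixpoint nvars n (t : nested n) : seq 'I_n :=
  match t with
  | NLit i _ => [:: i]
  | NOr i _ t' => i :: nvars t'
  | NAnd i _ t' => i :: nvars t'
  end.

Fixpoint nwf n (t : nested n) : bool :=
  match t with
  | NLit _ _ => true
  | NOr i _ t' => (i \notin nvars t') && nwf t'
  | NAnd i _ t' => (i \notin nvars t') && nwf t'
  end.

Fixpoint neval n (t : nested n) (x : pt n) : bool :=
  match t with
  | NLit i b => lit i b x
  | NOr i b t' => lit i b x || neval t' x
  | NAnd i b t' => lit i b x && neval t' x
  end.

Definition lro n (f : pt n -> bool) : Prop :=
  const_fun f \/ exists t : nested n, nwf t /\ forall x, f x = neval t x.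

From mathcomp Require Import all_boot zify.
Set Implicit Arguments. Unset Strict Implicit. Unset Printing Implicit Defensive.

(* Both statements hold for every positive [f].
   For a relevant variable [v], the extremal points of the restriction of [f]
   to [x_v = 1] embed into those of [f] and miss a maximal zero with [x_v = 0].
   Choosing [v] in as few minimal ones as possible makes the relevant variables
   of the two restrictions at [v] nested, so (up to duality) the restriction to
   [x_v = 1] keeps all relevant variables but [v], and induction gives the
   bound. In the equality case that maximal zero is unique and the restriction
   to [x_v = 0] has no new minimal ones, which forces [f] to be canalyzing.
   Splitting off a canalyzing variable, [f = x_i \/ h] or [f = x_i /\ h],
   lowers both counts by exactly one; this builds the nested formula and,
   conversely, gives the count for every linear read-once [f]. *)

Section Points.
Variable n : nat.
Implicit Types (x y z : pt n) (f g : pt n -> bool) (i j : 'I_n) (a : bool).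

Lemma updE x i a j : upd x i a j = if j == i then a else x j.
Proof. by rewrite ffunE. Qed.

Lemma upd_eq x i a : upd x i a i = a.
Proof. by rewrite updE eqxx. Qed.

Lemma upd_neq x i j a : j != i -> upd x i a j = x j.
Proof. by rewrite updE => /negbTE ->. Qed.

Lemma upd_upd x i a b : upd (upd x i a) i b = upd x i b.
Proof. by apply/ffunP => j; rewrite !updE; case: eqP. Qed.

Lemma updC x i j a b : i != j -> upd (upd x i a) j b = upd (upd x j b) i a.
Proof.
move=> ij; apply/ffunP => k; rewrite !updE.
by case: (eqVneq k j) => [->|//]; rewrite eq_sym (negbTE ij).
Qed.

Lemma upd_id x i a : x i = a -> upd x i a = x.
Proof. by move=> <-; apply/ffunP => j; rewrite updE; case: eqP => // ->. Qed.

Lemma upd1_neq x i : ~~ x i -> upd x i true != x.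
Proof. by apply: contra => /eqP <-; rewrite upd_eq. Qed.

Lemma upd0_neq x i : x i -> upd x i false != x.
Proof. by apply: contraL => /eqP <-; rewrite upd_eq. Qed.

Lemma bleqP x y : reflect (forall i, x i -> y i) (bleq x y).
Proof. by apply: (iffP forallP) => H i; [apply/implyP|apply/implyP/H]. Qed.

Lemma bleq_refl x : bleq x x.
Proof. by apply/bleqP. Qed.

Lemma bleq_trans x y z : bleq x y -> bleq y z -> bleq x z.
Proof. by move=> /bleqP H1 /bleqP H2; apply/bleqP => i /H1 /H2. Qed.

Lemma bleq_upd x y i a : bleq x y -> bleq (upd x i a) (upd y i a).
Proof. by move=> /bleqP H; apply/bleqP => j; rewrite !updE; case: eqP => // _ /H. Qed.

Lemma bleq_upd0 x i : bleq (upd x i false) x.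
Proof. by apply/bleqP => j; rewrite updE; case: eqP. Qed.

Lemma bleq_upd1 x i : bleq x (upd x i true).
Proof. by apply/bleqP => j; rewrite updE; case: eqP. Qed.

Lemma bleq_upd01 x i : bleq (upd x i false) (upd x i true).
Proof. exact: bleq_trans (bleq_upd0 x i) (bleq_upd1 x i). Qed.

Lemma bleq_upd1l x y i : bleq x y -> y i -> bleq (upd x i true) y.
Proof. by move=> /bleqP H yi; apply/bleqP => j; rewrite updE; case: eqP => [->|_ /H]. Qed.

Lemma bleq_upd0r x y i : bleq x y -> ~~ x i -> bleq x (upd y i false).
Proof.
move=> /bleqP H /negbTE xi; apply/bleqP => j; rewrite updE.
by case: eqP => [->|_ /H]; rewrite ?xi.
Qed.

Lemma positive_upd f x i : positive f -> f (upd x i false) -> f (upd x i true).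
Proof. by move=> Pf /Pf; apply; apply: bleq_upd01. Qed.

Definition weight x := #|[set i | x i]|.

Lemma weight_lt x y : bleq x y -> y != x -> weight x < weight y.
Proof.
move=> /bleqP xy yx; apply: proper_card; rewrite properEneq; apply/andP; split.
  apply: contra yx => /eqP /setP E; apply/eqP/ffunP => i.
  by have := E i; rewrite !inE => ->.
by apply/subsetP => i; rewrite !inE; apply: xy.
Qed.

Lemma max_zeroP f x :
  reflect (~~ f x /\ forall y, bleq x y -> y != x -> f y) (max_zero f x).
Proof.
apply: (iffP andP) => -[fx H]; split => //.
  by move=> y xy yx; move/forallP/(_ y): H; rewrite xy yx.
by apply/forallP => y; apply/implyP => /andP[]; apply: H.
Qed.

Lemma min_oneP f x :
  reflect (f x /\ forall y, bleq y x -> y != x -> ~~ f y) (min_one f x).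
Proof.
apply: (iffP andP) => -[fx H]; split => //.
  by move=> y yx ne; move/forallP/(_ y): H; rewrite yx ne.
by apply/forallP => y; apply/implyP => /andP[]; apply: H.
Qed.

Lemma max_zeroF f x : max_zero f x -> f x = false.
Proof. by case/andP => /negbTE. Qed.

Lemma min_oneT f x : min_one f x -> f x.
Proof. by case/andP. Qed.

Lemma max_zero_above f x : ~~ f x -> exists2 m, bleq x m & max_zero f m.
Proof.
move=> fx; have Px : [pred y | bleq x y && ~~ f y] x by rewrite /= bleq_refl.
case: (arg_maxnP weight Px) => m /andP[xm fm] mmax; exists m => //.
apply/max_zeroP; split => // y my ym; apply: contraT => fy.
have := mmax y; rewrite /= (bleq_trans xm my) fy => /(_ isT).
by rewrite leqNgt (weight_lt my ym).
Qed.

Lemma min_one_below f x : f x -> exists2 m, bleq m x & min_one f m.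
Proof.
move=> fx; have Px : [pred y | bleq y x && f y] x by rewrite /= bleq_refl.
case: (arg_minnP weight Px) => m /andP[mx fm] mmin; exists m => //.
apply/min_oneP; split => // y ym my; apply/negP => fy.
have := mmin y; rewrite /= (bleq_trans ym mx) fy => /(_ isT).
by rewrite leqNgt (weight_lt ym) // eq_sym.
Qed.

Lemma eq_max_zero f g : f =1 g -> max_zero f =1 max_zero g.
Proof.
by move=> fg x; rewrite /max_zero fg; congr (_ && _); apply: eq_forallb => y; rewrite fg.
Qed.

Lemma eq_min_one f g : f =1 g -> min_one f =1 min_one g.
Proof.
by move=> fg x; rewrite /min_one fg; congr (_ && _); apply: eq_forallb => y; rewrite fg.
Qed.

Lemma eq_extremal_points f g : f =1 g -> extremal_points f = extremal_points g.
Proof. by move=> fg; apply/setP => x; rewrite !inE (eq_max_zero fg) (eq_min_one fg). Qed.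

Definition zero : pt n := [ffun => false].
Definition one : pt n := [ffun => true].

Lemma bleq0x x : bleq zero x.
Proof. by apply/bleqP => i; rewrite ffunE. Qed.

Lemma bleqx1 x : bleq x one.
Proof. by apply/bleqP => i; rewrite ffunE. Qed.

Lemma bleqx0 x : bleq x zero = (x == zero).
Proof.
apply/bleqP/eqP => [H|-> i //]; apply/ffunP => i; rewrite ffunE.
by apply/negbTE/negP => /H; rewrite ffunE.
Qed.

Lemma bleq1x x : bleq one x = (x == one).
Proof.
apply/bleqP/eqP => [H|-> i //]; apply/ffunP => i; rewrite ffunE.
by apply: H; rewrite ffunE.
Qed.

Lemma extremal_points_const f c :
  (forall x, f x = c) -> extremal_points f = [set if c then zero else one].
Proof.
move=> fc; apply/setP => x; rewrite !inE /max_zero /min_one !fc.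
case: c fc => fc /=; rewrite ?orbF.
  apply/forallP/eqP => [/(_ zero)|-> y]; first by rewrite bleq0x fc eq_sym; case: eqP.
  by rewrite bleqx0 fc andbN.
apply/forallP/eqP => [/(_ one)|-> y]; first by rewrite bleqx1 fc eq_sym; case: eqP.
by rewrite bleq1x fc andbN.
Qed.

End Points.
Arguments zero {n}.
Arguments one {n}.

Section Relevance.
Variable n : nat.
Implicit Types (x y : pt n) (f g h : pt n -> bool) (i j v : 'I_n) (a : bool).

Definition ignores h v := forall x a, h (upd x v a) = h x.

Lemma restrict_ignores g v a : ignores (restrict g v a) v.
Proof. by move=> x b; rewrite /restrict upd_upd. Qed.

Lemma ignores_max_zero h v x : ignores h v -> max_zero h x -> x v.
Proof.
move=> hv /max_zeroP[hx xmax]; apply: contraT => xv.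
by have := xmax _ (bleq_upd1 x v) (upd1_neq xv); rewrite hv (negbTE hx).
Qed.

Lemma ignores_min_one h v x : ignores h v -> min_one h x -> ~~ x v.
Proof.
move=> hv /min_oneP[hx xmin]; apply/negP => xv.
by have := xmin _ (bleq_upd0 x v) (upd0_neq xv); rewrite hv hx.
Qed.

Lemma relevantP f i :
  reflect (exists x, f (upd x i false) != f (upd x i true)) (relevant f i).
Proof. exact: existsP. Qed.

Lemma relevant_posP f i : positive f ->
  reflect (exists x, ~~ f (upd x i false) && f (upd x i true)) (relevant f i).
Proof.
move=> Pf; apply: (iffP (relevantP f i)) => -[x fx]; exists x; last first.
  by case: (f _) fx; case: (f _).
by move: fx (@positive_upd _ f x i Pf); case: (f _); case: (f _) => // _ /(_ isT).
Qed.

Lemma ignores_irrelevant h v : ignores h v -> ~~ relevant h v.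
Proof. by move=> hv; apply/relevantP => -[x]; rewrite !hv eqxx. Qed.

Lemma relevant_restrict g v a i : relevant (restrict g v a) i -> relevant g i.
Proof.
case: (eqVneq i v) => [->|iv].
  by rewrite (negbTE (ignores_irrelevant (restrict_ignores g v a))).
case/relevantP => x; rewrite /restrict !(@updC _ x i v) // => gx.
by apply/relevantP; exists (upd x v a).
Qed.

Lemma relevant_restrict_split g v i : relevant g i -> i != v ->
  relevant (restrict g v false) i || relevant (restrict g v true) i.
Proof.
case/relevantP => x gx iv; have xv a : upd (upd x i a) v (x v) = upd x i a.
  by rewrite updC // (upd_id (erefl (x v))).
move: (xv false) (xv true); case: (x v) => x0 x1; apply/orP; [right|left];
  by apply/relevantP; exists x; rewrite /restrict x0 x1.
Qed.

Lemma relevant_vars_restrict g v a :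
  relevant_vars (restrict g v a) \subset relevant_vars g :\ v.
Proof.
apply/subsetP => i; rewrite !inE => Ri; rewrite (relevant_restrict Ri) andbT.
by apply: contraTneq Ri => ->; apply: ignores_irrelevant; apply: restrict_ignores.
Qed.

Lemma relevant_vars_split g v : relevant_vars g \subset
  v |: (relevant_vars (restrict g v false) :|: relevant_vars (restrict g v true)).
Proof.
apply/subsetP => i; rewrite !inE => Ri.
by case: eqVneq => //= iv; apply: relevant_restrict_split.
Qed.

Lemma eq_relevant f g i : f =1 g -> relevant f i = relevant g i.
Proof. by move=> fg; apply: eq_existsb => x; rewrite /restrict !fg. Qed.

Lemma eq_relevant_vars f g : f =1 g -> relevant_vars f = relevant_vars g.
Proof. by move=> fg; apply/setP => i; rewrite !inE (eq_relevant _ fg). Qed.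

Lemma relevant_vars_const f c : (forall x, f x = c) -> relevant_vars f = set0.
Proof.
by move=> fc; apply/setP => i; rewrite !inE; apply/relevantP => -[x]; rewrite !fc eqxx.
Qed.

Lemma const_relevant_vars0 f : positive f -> relevant_vars f = set0 ->
  forall x, f x = f zero.
Proof.
move=> Pf R0 x; case fz: (f zero); first exact: Pf fz (bleq0x x).
apply/negbTE/negP => fx; case: (min_one_below fx) => a _ /min_oneP[fa amin].
have [i ai] : exists i, a i.
  case: (pickP a) => [i ai|a0]; first by exists i.
  suff az : a = zero by move: fa; rewrite az fz.
  by apply/ffunP => i; rewrite ffunE a0.
suff : i \in relevant_vars f by rewrite R0 inE.
rewrite inE; apply/relevantP; exists a.
by rewrite (upd_id ai) fa (negbTE (amin _ (bleq_upd0 a i) (upd0_neq ai))).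
Qed.

End Relevance.

Section Duality.
Variable n : nat.
Implicit Types (x y : pt n) (f g : pt n -> bool) (i v : 'I_n) (a : bool).

Definition compl x : pt n := [ffun i => ~~ x i].
Definition dual f : pt n -> bool := fun x => ~~ f (compl x).

Lemma complE x i : compl x i = ~~ x i.
Proof. by rewrite ffunE. Qed.

Lemma complK : involutive compl.
Proof. by move=> x; apply/ffunP => i; rewrite !complE negbK. Qed.

Lemma compl_inj : injective compl.
Proof. exact: can_inj complK. Qed.

Lemma dualK f : dual (dual f) =1 f.
Proof. by move=> x; rewrite /dual complK negbK. Qed.

Lemma bleq_compl x y : bleq (compl x) (compl y) = bleq y x.
Proof.
apply/bleqP/bleqP => xy i; last by rewrite !complE; apply: contra; apply: xy.
by have := xy i; rewrite !complE; case: (x i) (y i) => [] [] // /(_ isT).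
Qed.

Lemma upd_compl x i a : compl (upd x i a) = upd (compl x) i (~~ a).
Proof. by apply/ffunP => j; rewrite complE !updE complE; case: eqP. Qed.

Lemma dual_positive f : positive f -> positive (dual f).
Proof. by move=> Pf x y fx xy; apply: contra fx => /Pf; apply; rewrite bleq_compl. Qed.

Lemma max_zero_dual f x : max_zero (dual f) x = min_one f (compl x).
Proof.
apply/max_zeroP/min_oneP => -[fx xmax].
  split=> [|y yx yx']; first by rewrite /dual negbK in fx.
  have := xmax (compl y); rewrite /dual complK; apply.
    by rewrite -[x]complK bleq_compl.
  by rewrite -(inj_eq compl_inj) complK.
split=> [|y xy yx]; first by rewrite /dual negbK.
by apply: xmax; rewrite ?bleq_compl ?(inj_eq compl_inj).
Qed.

Lemma min_one_dual f x : min_one (dual f) x = max_zero f (compl x).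
Proof. by rewrite -[in RHS](eq_max_zero (dualK f)) max_zero_dual complK. Qed.

Lemma extremal_points_dual f :
  extremal_points (dual f) = compl @: extremal_points f.
Proof.
apply/setP => x; rewrite -[x in RHS]complK (mem_imset _ _ compl_inj) !inE.
by rewrite max_zero_dual min_one_dual orbC.
Qed.

Lemma card_extremal_points_dual f :
  #|extremal_points (dual f)| = #|extremal_points f|.
Proof. by rewrite extremal_points_dual card_imset //; apply: compl_inj. Qed.

Lemma restrict_dual f v a : restrict (dual f) v a =1 dual (restrict f v (~~ a)).
Proof. by move=> x; rewrite /restrict /dual upd_compl. Qed.

Lemma relevant_dual f i : relevant (dual f) i = relevant f i.
Proof.
apply/relevantP/relevantP => -[x fx]; exists (compl x); move: fx;
  by rewrite /dual !upd_compl ?complK /=; case: (f _); case: (f _).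
Qed.

Lemma relevant_vars_dual f : relevant_vars (dual f) = relevant_vars f.
Proof. by apply/setP => i; rewrite !inE relevant_dual. Qed.

Lemma canalyzing_dual f : canalyzing (dual f) -> canalyzing f.
Proof.
case=> i [a [c fc]]; exists i, (~~ a), (~~ c) => x.
by rewrite -(fc (compl x)) restrict_dual /dual complK negbK.
Qed.

Lemma const_fun_dual f : const_fun (dual f) -> const_fun f.
Proof.
by case=> c fc; exists (~~ c) => x; rewrite -(fc (compl x)) /dual complK negbK.
Qed.

End Duality.

Section RestrictionCount.
Variable n : nat.
Implicit Types (x y : pt n) (S : {set pt n}).
Variables (g : pt n -> bool) (v : 'I_n).
Hypothesis Pg : positive g.

Local Notation g0 := (restrict g v false).
Local Notation g1 := (restrict g v true).

Lemma positive_restrict a : positive (restrict g v a).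
Proof. by move=> x y gx xy; apply: Pg gx (bleq_upd _ _ xy). Qed.

Lemma restrict1_ge x : g x -> g1 x.
Proof. by move/Pg; apply; apply: bleq_upd1. Qed.

Lemma restrict0_le x : g0 x -> g x.
Proof. by move/Pg; apply; apply: bleq_upd0. Qed.

Lemma restrict_at x a : x v = a -> g x = restrict g v a x.
Proof. by move=> xv; rewrite /restrict upd_id. Qed.

Lemma min_one_restrict0 w : min_one g0 w -> min_one g w.
Proof.
move=> w_min; have /negbTE wv := ignores_min_one (restrict_ignores g v false) w_min.
case/min_oneP: w_min => g0w w_min; apply/min_oneP.
split; first by rewrite (restrict_at wv).
move=> y yw ne; have yv : y v = false by apply: contraFF wv; apply: (bleqP _ _ yw).
by rewrite (restrict_at yv); apply: w_min.
Qed.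

(* Maximal zeros of [g1] are maximal zeros of [g]; a minimal one of [g1] that
   is a zero of [g] becomes a minimal one of [g] once [v] is switched on. *)
Definition lift1 p := if min_one g1 p && ~~ g p then upd p v true else p.

Lemma lift1_extremal p : p \in extremal_points g1 -> lift1 p \in extremal_points g.
Proof.
rewrite !inE /lift1; case: (boolP (min_one g1 p)) => [p_min _|_]; last first.
  rewrite orbF => p_max; have pv := ignores_max_zero (restrict_ignores g v true) p_max.
  apply/orP; left; case/max_zeroP: p_max => g1p p_max; apply/max_zeroP.
  split=> [|y py ne]; first by rewrite (restrict_at pv).
  by rewrite (restrict_at (bleqP _ _ py v pv)); apply: p_max.
have /negbTE pv := ignores_min_one (restrict_ignores g v true) p_min.
case/min_oneP: p_min => g1p p_min; apply/orP; right.
case: (boolP (g p)) => /= [gp|/negbTE gp]; apply/min_oneP; split=> // y yp ne.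
  by apply: contra (p_min _ yp ne); apply: restrict1_ge.
case: (boolP (y v)) => yv.
  rewrite (restrict_at yv) -(restrict_ignores g v true y false); apply: p_min.
    by have := bleq_upd v false yp; rewrite upd_upd (upd_id pv).
  by apply: contra ne => /eqP <-; rewrite upd_upd (upd_id yv).
apply: contraFN gp => gy; apply: Pg gy _; apply/bleqP => j yj.
have := bleqP _ _ yp j yj; rewrite updE; case: eqP => // jv.
by move: yj; rewrite jv (negbTE yv).
Qed.

Lemma extremal_restrict1_at p : p \in extremal_points g1 -> p v = ~~ g1 p.
Proof.
rewrite inE => /orP[p_max|p_min].
  by rewrite (ignores_max_zero (restrict_ignores g v true) p_max) (max_zeroF p_max).
by rewrite (negbTE (ignores_min_one (restrict_ignores g v true) p_min)) (min_oneT p_min).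
Qed.

Lemma lift1_off p j : j != v -> lift1 p j = p j.
Proof. by rewrite /lift1; case: ifP => // _; apply: upd_neq. Qed.

Lemma lift1_inj : {in extremal_points g1 &, injective lift1}.
Proof.
move=> p q Ep Eq pq; have off j : j != v -> p j = q j.
  by move=> jv; rewrite -(lift1_off p jv) -(lift1_off q jv) pq.
have pq1 : upd p v true = upd q v true.
  by apply/ffunP => j; rewrite !updE; case: eqP => // /eqP /off.
apply/ffunP => j; case: (eqVneq j v) => [->|/off //].
by rewrite (extremal_restrict1_at Ep) (extremal_restrict1_at Eq) /restrict pq1.
Qed.

Lemma lift1_at0 p : p \in extremal_points g1 -> ~~ lift1 p v ->
  [/\ lift1 p = p, min_one g1 p & g p].
Proof.
move=> Ep; rewrite /lift1; case: ifP => [_|/negbT]; first by rewrite upd_eq.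
rewrite negb_and negbK => gp pv.
have g1p : g1 p by rewrite -[g1 p]negbK -(extremal_restrict1_at Ep).
have p_min : min_one g1 p by move: Ep; rewrite inE /max_zero g1p.
by split=> //; move: gp; rewrite p_min.
Qed.

Lemma card_extremal_restrict1 S : S \subset extremal_points g ->
  {in S, forall x, ~~ x v && ~~ (min_one g1 x && g x)} ->
  #|extremal_points g1| + #|S| <= #|extremal_points g|.
Proof.
move=> SE Sx; rewrite -(card_in_imset lift1_inj) -cardsUI.
have -> : lift1 @: extremal_points g1 :&: S = set0.
  apply/setP => x; rewrite !inE; apply/andP => -[/imsetP[p Ep ->] /Sx /andP[pv]].
  by case: (lift1_at0 Ep pv) => -> -> ->.
rewrite cards0 addn0; apply: subset_leq_card; rewrite subUset SE andbT.
by apply/subsetP => x /imsetP[p Ep ->]; apply: lift1_extremal.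
Qed.

Lemma max_zero_at0 : relevant g v -> exists2 b, max_zero g b & ~~ b v.
Proof.
case/(relevant_posP _ Pg) => x /andP[g0x g1x].
case: (max_zero_above g0x) => b xb b_max; exists b => //.
apply: contraFN (max_zeroF b_max) => bv; apply: Pg g1x _.
by rewrite -[upd x v true](upd_upd x v false) bleq_upd1l.
Qed.

Lemma card_extremal_restrict1_lt : relevant g v ->
  #|extremal_points g1| < #|extremal_points g|.
Proof.
case/max_zero_at0 => b b_max bv; rewrite -addn1 -(cards1 b).
apply: card_extremal_restrict1 => [|x]; first by rewrite sub1set inE b_max.
by rewrite inE => /eqP ->; rewrite bv (max_zeroF b_max) andbF.
Qed.

End RestrictionCount.
Arguments positive_restrict {n g} [v] Pg a.
Arguments restrict_at {n g v x a}.
Arguments restrict1_ge {n g} [v] Pg [x].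

Section Selection.
Variable n : nat.
Implicit Types (x y z a : pt n) (g : pt n -> bool) (u v w : 'I_n).

Lemma min_one_restrict0_irrelevant g v w a : ~~ relevant (restrict g v false) w ->
  min_one g a -> a w -> a v.
Proof.
move=> Nw a_min aw; apply: contraT => av; case/negP: Nw; apply/relevantP.
have wv : w != v by apply: contraNneq av => <-.
exists a; rewrite /restrict (upd_id aw) (upd_id (negbTE av)).
rewrite (@upd_id _ (upd a w false) v false) ?upd_neq ?(negbTE av) 1?eq_sym //.
by case/min_oneP: a_min => -> /(_ _ (bleq_upd0 a w) (upd0_neq aw)) /negbTE ->.
Qed.

Lemma max_zero_restrict1_irrelevant g v u z : ~~ relevant (restrict g v true) u ->
  max_zero g z -> z v -> z u.
Proof.
move=> Nu z_max zv; apply: contraT => zu; case/negP: Nu; apply/relevantP.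
have uv : u != v by apply: contraNneq zu => ->.
exists z; rewrite /restrict (upd_id (negbTE zu)) (upd_id zv).
rewrite (@upd_id _ (upd z u true) v true) ?upd_neq 1?eq_sym //.
by case/max_zeroP: z_max => /negbTE -> /(_ _ (bleq_upd1 z u) (upd1_neq zu)) ->.
Qed.

Section Linked.
Variables (g : pt n -> bool) (u v w : 'I_n).
Hypothesis Pg : positive g.
Hypothesis min_one_vw : forall a, min_one g a -> a v = a w.
Hypothesis max_zero_vu : forall z, max_zero g z -> z v -> z u.
Hypothesis wv : w != v.

Lemma restrict0_irrelevant_linked : ~~ relevant (restrict g v false) u.
Proof.
apply/negP => Ru0; have uv : u != v.
  by apply: contraTneq Ru0 => ->; apply: ignores_irrelevant; apply: restrict_ignores.
have P0 : positive (restrict g v false) := positive_restrict Pg false.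
case/(relevant_posP _ P0): Ru0 => x; rewrite /restrict => /andP[gx0 gx1].
case: (max_zero_above gx0) => m xm m_max.
have mu : ~~ m u.
  apply: contraFN (max_zeroF m_max) => mu; apply: Pg gx1 _.
  have -> : upd (upd x u true) v false = upd (upd (upd x u false) v false) u true.
    by rewrite [RHS]updC 1?eq_sym // upd_upd.
  exact: bleq_upd1l xm mu.
have mv : ~~ m v by apply: contra mu; apply: max_zero_vu.
set y := upd (upd m v true) w false.
have yv : y v by rewrite /y upd_neq 1?eq_sym // upd_eq.
have gy : ~~ g y.
  apply/negP => /min_one_below[a ay a_min].
  have aw : ~~ a w by apply/negP => /(bleqP _ _ ay); rewrite /y upd_eq.
  have av : ~~ a v by rewrite min_one_vw.
  suff : g m by rewrite (max_zeroF m_max).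
  apply: Pg (min_oneT a_min) _.
  apply/bleqP => j aj; have := bleqP _ _ ay j aj; rewrite /y !updE.
  case: eqP => [jw|_]; first by move: aw; rewrite -jw aj.
  by case: eqP => // jv; move: av; rewrite -jv aj.
have gyu : g (upd y u true).
  have /min_one_below[a am a_min] : g (upd m u true).
    by apply: (max_zeroP _ _ m_max).2; [apply: bleq_upd1|apply: upd1_neq].
  have av : ~~ a v.
    by apply/negP => /(bleqP _ _ am); rewrite upd_neq 1?eq_sym // (negbTE mv).
  have aw : ~~ a w by rewrite -min_one_vw.
  apply: Pg (min_oneT a_min) _; apply/bleqP => j aj; have := bleqP _ _ am j aj.
  rewrite /y !updE; case: eqP => // _; case: eqP => [jw|_]; last by case: eqP.
  by move: aw; rewrite -jw aj.
case: (max_zero_above gy) => m' ym' m'_max.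
have m'u := max_zero_vu m'_max (bleqP _ _ ym' v yv).
suff : g m' by rewrite (max_zeroF m'_max).
exact: Pg gyu (bleq_upd1l ym' m'u).
Qed.

End Linked.

(* Choosing [v] relevant with the fewest minimal ones containing it forces the
   relevant variables of the two restrictions at [v] to be nested. *)
Lemma relevant_restrict_nested g : positive g -> relevant_vars g != set0 ->
  exists2 v, relevant g v &
    relevant_vars (restrict g v false) \subset relevant_vars (restrict g v true) \/
    relevant_vars (restrict g v true) \subset relevant_vars (restrict g v false).
Proof.
move=> Pg /set0Pn[i0]; rewrite inE => Ri0; pose mass i := [set a | min_one g a && a i].
case: (arg_minnP (fun i => #|mass i|) Ri0) => v Rv v_min.
exists v => //.
case: (boolP (relevant_vars (restrict g v false) \subset _)) => [|/subsetPn[u]]; first by left.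
rewrite !inE => Ru0 Nu1; right; apply/subsetP => w; rewrite !inE => Rw1.
apply: contraT => Nw0.
have wv : w != v.
  by apply: contraTneq Rw1 => ->; apply: ignores_irrelevant; apply: restrict_ignores.
have mass_wv : mass w \subset mass v.
  apply/subsetP => a; rewrite !inE => /andP[a_min aw].
  by rewrite a_min (min_one_restrict0_irrelevant Nw0 a_min aw).
have /eqP mass_eq : mass w == mass v.
  by rewrite eqEcard mass_wv v_min // (relevant_restrict Rw1).
suff : ~~ relevant (restrict g v false) u by rewrite Ru0.
apply: (restrict0_irrelevant_linked Pg) wv => [a a_min|z].
  by move/setP/(_ a): mass_eq; rewrite !inE a_min.
exact: max_zero_restrict1_irrelevant.
Qed.

End Selection.

Section Tightness.
Variable n : nat.
Implicit Types (x : pt n) (h : pt n -> bool) (i : 'I_n).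

Lemma positive_restrict0_true h i : positive h ->
  (forall x, restrict h i false x) -> forall x, h x.
Proof. by move=> Ph h0 x; apply: Ph (h0 x) (bleq_upd0 x i). Qed.

Lemma positive_restrict1_false h i : positive h ->
  (forall x, ~~ restrict h i true x) -> forall x, ~~ h x.
Proof. by move=> Ph h1 x; apply: contra (h1 x) => /Ph; apply; apply: bleq_upd1. Qed.

Variables (g : pt n -> bool) (v : 'I_n).
Hypotheses (Pg : positive g) (Rv : relevant g v).

Local Notation g0 := (restrict g v false).
Local Notation g1 := (restrict g v true).

Hypothesis tight : #|extremal_points g| = #|extremal_points g1|.+1.

Lemma tight_max_zero_uniq b1 b2 :
  max_zero g b1 -> ~~ b1 v -> max_zero g b2 -> ~~ b2 v -> b1 = b2.
Proof.
move=> b1_max b1v b2_max b2v; apply/eqP.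
have := card_extremal_restrict1 (v := v) Pg (S := [set b1; b2]).
rewrite tight cards2 addnS ltnS -[X in _ <= X]addn0 leq_add2l leqn0 eqb0 negbK; apply.
  by rewrite subUset !sub1set !inE b1_max b2_max.
move=> x; rewrite !inE => /orP[] /eqP ->.
  by rewrite b1v (max_zeroF b1_max) andbF.
by rewrite b2v (max_zeroF b2_max) andbF.
Qed.

Lemma tight_min_one_restrict0 w : min_one g0 w -> min_one g1 w.
Proof.
move=> w_min; apply: contraT => Nw.
case: (max_zero_at0 Pg Rv) => b b_max bv; have w_min' := min_one_restrict0 w_min.
have wb : w != b by apply: contraTneq (min_oneT w_min') => ->; rewrite (max_zeroF b_max).
have := card_extremal_restrict1 (v := v) Pg (S := [set w; b]).
rewrite tight cards2 wb addn2 ltnn; apply.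
  by rewrite subUset !sub1set !inE b_max w_min' orbT.
move=> x; rewrite !inE => /orP[] /eqP ->; last by rewrite bv (max_zeroF b_max) andbF.
by rewrite (ignores_min_one (restrict_ignores g v false) w_min) (negbTE Nw).
Qed.

Section AbsorbedVariable.
Variable y : 'I_n.
Hypotheses (yv : y != v) (g1y : forall x, g1 (upd x y true)).

Local Notation e := (upd zero y true).

Lemma tight_restrict0_drop : ~~ g0 e -> forall x, g0 x -> g0 (upd x y false).
Proof.
move=> g0e x /min_one_below[w wx w_min].
have wy : ~~ w y.
  apply/negP => wy; have /min_oneP[_ w_min1] := tight_min_one_restrict0 w_min.
  case: (eqVneq e w) => [ew|ne]; first by move: g0e; rewrite ew (min_oneT w_min).
  by have := w_min1 e (bleq_upd1l (bleq0x w) wy) ne; rewrite g1y.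
exact: positive_restrict Pg false _ _ (min_oneT w_min) (bleq_upd0r wx wy).
Qed.

(* If [e] is a one of [g0], setting [x_y = 1] forces [g]. Otherwise [g0]
   ignores [y]; the unique maximal zero [b] with [b_v = 0] has some [b_j = 0],
   and a zero of [g] with [x_j = 1] would climb to a second such maximal zero. *)
Lemma tight_canalyzing_absorbed : canalyzing g.
Proof.
case: (boolP (g0 e)) => [g0e|/tight_restrict0_drop drop].
  exists y, true, true => x; apply: Pg g0e _.
  exact: bleq_trans (bleq_upd0 e v) (bleq_upd y true (bleq0x x)).
case: (pickP g0) => [x0 g0x0|g0F]; last by exists v, false, false.
case: (max_zero_at0 Pg Rv) => b b_max bv.
have [j jv bj] : exists2 j, j != v & ~~ b j.
  case: (pickP [pred j | (j != v) && ~~ b j]) => [j /andP[]|b1]; first by exists j.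
  suff : g b by rewrite (max_zeroF b_max).
  apply: Pg g0x0 _; apply/bleqP => j; rewrite updE; case: eqP => // /eqP jv _.
  by have := b1 j; rewrite /= jv => /negbFE.
exists j, true, true => x; apply: contraT => gx.
set x' := upd (upd (upd x j true) v false) y true.
have gx' : ~~ g x'.
  apply: contra gx; rewrite /x' updC 1?eq_sym // => /drop.
  by rewrite upd_upd => /(restrict0_le Pg) /Pg; apply; apply: bleq_upd0.
case: (max_zero_above gx') => m x'm m_max.
have my : m y by apply: (bleqP _ _ x'm); rewrite upd_eq.
have mv : ~~ m v.
  by apply: contraFN (max_zeroF m_max) => mv; rewrite (restrict_at mv) -(upd_id my).
case/negP: bj; rewrite -(tight_max_zero_uniq m_max mv b_max bv).
by apply: (bleqP _ _ x'm); rewrite updE; case: eqP => // _; rewrite upd_neq // upd_eq.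
Qed.

End AbsorbedVariable.

Lemma tight_canalyzing : const_fun g1 \/ canalyzing g1 -> canalyzing g.
Proof.
have const1 : const_fun g1 -> canalyzing g by exists v, true.
case=> [/const1 //|[y [a [c g1c]]]].
case: (eqVneq y v) => [yv|yv].
  by apply: const1; exists c => x; rewrite -(g1c x) /restrict yv upd_upd.
have P1 : positive g1 := positive_restrict Pg true.
case: a c g1c => [] [] g1c.
- exact: tight_canalyzing_absorbed yv g1c.
- apply: const1; exists false => x; apply/negbTE; move: x.
  by apply: (positive_restrict1_false (i := y) P1) => x; rewrite g1c.
- by apply: const1; exists true; apply: (positive_restrict0_true (i := y) P1).
- exists y, false, false => x; apply: contraFF (g1c x); exact: (restrict1_ge (v := v) Pg).
Qed.

End Tightness.

Definition extremal_spec n (g : pt n -> bool) : Prop :=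
  #|relevant_vars g|.+1 <= #|extremal_points g| /\
  (#|extremal_points g| = #|relevant_vars g|.+1 -> const_fun g \/ canalyzing g).

Section ExtremalBound.
Variable n : nat.
Implicit Types (g : pt n -> bool) (v : 'I_n).

Lemma extremal_spec_const g c : (forall x, g x = c) -> extremal_spec g.
Proof.
move=> gc; rewrite /extremal_spec (extremal_points_const gc) (relevant_vars_const gc).
by rewrite cards1 cards0; split=> // _; left; exists c.
Qed.

Lemma extremal_spec_dual g : extremal_spec (dual g) -> extremal_spec g.
Proof.
rewrite /extremal_spec card_extremal_points_dual relevant_vars_dual => -[bound tight].
by split=> // /tight [/const_fun_dual|/canalyzing_dual]; [left|right].
Qed.

Lemma card_relevant_vars_restrict g v a : relevant g v ->
  #|relevant_vars (restrict g v a)| < #|relevant_vars g|.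
Proof.
move=> Rv; apply: leq_ltn_trans (subset_leq_card (relevant_vars_restrict g v a)) _.
by rewrite [X in _ < X](cardsD1 v) inE Rv.
Qed.

Lemma card_relevant_vars_nested g v :
  relevant_vars (restrict g v false) \subset relevant_vars (restrict g v true) ->
  #|relevant_vars g| <= #|relevant_vars (restrict g v true)|.+1.
Proof.
move=> sub; apply: leq_trans (subset_leq_card (relevant_vars_split g v)) _.
by rewrite (setUidPr sub) cardsU1 -add1n leq_add2r leq_b1.
Qed.

Lemma extremal_spec_restrict g v : positive g -> relevant g v ->
  relevant_vars (restrict g v false) \subset relevant_vars (restrict g v true) ->
  extremal_spec (restrict g v true) -> extremal_spec g.
Proof.
move=> Pg Rv /card_relevant_vars_nested rel_le [bound1 tight1].
have ext_lt := card_extremal_restrict1_lt Pg Rv.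
split=> [|tight]; first by lia.
right; apply: tight_canalyzing Pg Rv _ (tight1 _); lia.
Qed.

Theorem extremal_spec_positive g : positive g -> extremal_spec g.
Proof.
have [k] := ubnP #|relevant_vars g|; elim: k g => // k IH g lt_gk Pg.
case: (eqVneq (relevant_vars g) set0) => [R0|/(relevant_restrict_nested Pg)[v Rv sub]].
  exact: extremal_spec_const (const_relevant_vars0 Pg R0).
have lt_k a h : relevant_vars h = relevant_vars (restrict g v a) ->
    #|relevant_vars h| < k.
  by move=> ->; have := card_relevant_vars_restrict a Rv; lia.
case: sub => sub.
  exact: extremal_spec_restrict Pg Rv sub
    (IH _ (lt_k true _ erefl) (positive_restrict Pg true)).
have rel_dual a :
    relevant_vars (restrict (dual g) v a) = relevant_vars (restrict g v (~~ a)).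
  by rewrite (eq_relevant_vars (restrict_dual g v a)) relevant_vars_dual.
apply/extremal_spec_dual/(extremal_spec_restrict (v := v) (dual_positive Pg)).
- by rewrite relevant_dual.
- by rewrite !rel_dual.
- exact: IH (lt_k false _ (rel_dual true)) (positive_restrict (dual_positive Pg) true).
Qed.

End ExtremalBound.

Section Absorbing.
Variable n : nat.
Implicit Types (x y : pt n).
Variables (f : pt n -> bool) (i : 'I_n).
Hypotheses (Pf : positive f) (f1 : forall x, f (upd x i true)).

Local Notation h := (restrict f i false).
Local Notation e := (upd zero i true).

Lemma max_zero_absorbing x : max_zero f x -> max_zero h (upd x i true).
Proof.
case/max_zeroP=> fx x_max; have xi : ~~ x i by apply: contraNN fx => /upd_id <-.
apply/max_zeroP; split=> [|y xy ne].
  by rewrite /restrict upd_upd upd_id ?(negbTE xi).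
have yi : y i by apply: (bleqP _ _ xy); rewrite upd_eq.
apply: x_max; first exact: bleq_upd0r (bleq_trans (bleq_upd1 x i) xy) xi.
by apply: contra ne => /eqP <-; rewrite upd_upd upd_id.
Qed.

Lemma min_one_absorbing x : min_one f x -> x = e \/ ~~ x i /\ min_one h x.
Proof.
case/min_oneP=> fx x_min; case: (boolP (x i)) => xi; [left|right].
  apply/eqP; apply: contraT => ne; have := x_min e (bleq_upd1l (bleq0x x) xi).
  by rewrite eq_sym ne f1 => /(_ isT).
split=> //; apply/min_oneP; split=> [|y yx ne].
  by rewrite /restrict upd_id ?(negbTE xi).
have yi : ~~ y i by apply: contra xi; apply: (bleqP _ _ yx).
by rewrite /restrict upd_id ?(negbTE yi) //; apply: x_min.
Qed.

Definition lower0 p := if h p then p else upd p i false.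

Lemma extremal_points_absorbing :
  extremal_points f \subset e |: lower0 @: extremal_points h.
Proof.
apply/subsetP => x; rewrite !inE => /orP[x_max|/min_one_absorbing[->|[xi x_min]]].
- have Ex : upd x i true \in extremal_points h by rewrite inE max_zero_absorbing.
  have xi : ~~ x i by apply: contraFN (max_zeroF x_max) => /upd_id <-.
  apply/orP; right; apply/imsetP; exists (upd x i true) => //.
  by rewrite /lower0 (max_zeroF (max_zero_absorbing x_max)) upd_upd upd_id ?(negbTE xi).
- by rewrite eqxx.
- apply/orP; right; apply/imsetP; exists x; first by rewrite inE x_min orbT.
  by rewrite /lower0 (min_oneT x_min).
Qed.

Hypothesis h_nontrivial : exists x, ~~ h x.

Lemma relevant_vars_absorbing : relevant_vars f = i |: relevant_vars h.
Proof.
apply/eqP; rewrite eqEsubset; apply/andP; split.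
  apply: subset_trans (relevant_vars_split f i) _.
  by rewrite (@relevant_vars_const _ (restrict f i true) true) // setU0.
rewrite subUset sub1set inE; apply/andP; split.
  case: h_nontrivial => x hx; apply/relevantP; exists x.
  by move: hx; rewrite /restrict f1 => /negbTE ->.
by apply/subsetP => j; rewrite !inE; apply: relevant_restrict.
Qed.

Lemma card_relevant_vars_absorbing : #|relevant_vars f| = #|relevant_vars h|.+1.
Proof.
rewrite relevant_vars_absorbing cardsU1 inE.
by rewrite (negbTE (ignores_irrelevant (restrict_ignores f i false))).
Qed.

Lemma card_extremal_points_absorbing :
  #|extremal_points f| = #|extremal_points h|.+1.
Proof.
apply/eqP; rewrite eqn_leq; apply/andP; split.
  apply: leq_trans (subset_leq_card extremal_points_absorbing) _.
  by rewrite cardsU1 -add1n leq_add ?leq_b1 ?leq_imset_card.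
have Rd : relevant (dual f) i.
  by move: (setU11 i (relevant_vars h)); rewrite -relevant_vars_absorbing inE relevant_dual.
have := card_extremal_restrict1_lt (dual_positive Pf) Rd.
by rewrite (eq_extremal_points (restrict_dual f i true)) !card_extremal_points_dual.
Qed.

End Absorbing.

Lemma card_annihilating n (f : pt n -> bool) i : positive f ->
  (forall x, ~~ f (upd x i false)) -> (exists x, restrict f i true x) ->
  #|extremal_points f| = #|extremal_points (restrict f i true)|.+1 /\
  #|relevant_vars f| = #|relevant_vars (restrict f i true)|.+1.
Proof.
move=> Pf f0 [x0 fx0].
have d1 x : dual f (upd x i true) by rewrite /dual upd_compl f0.
have dh : exists x, ~~ restrict (dual f) i false x.
  by exists (compl x0); rewrite restrict_dual /dual complK negbK.
have := card_extremal_points_absorbing (dual_positive Pf) d1 dh.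
have := card_relevant_vars_absorbing d1 dh.
rewrite (eq_extremal_points (restrict_dual f i false)).
rewrite (eq_relevant_vars (restrict_dual f i false)).
by rewrite !card_extremal_points_dual !relevant_vars_dual.
Qed.

Section NestedFormulas.
Variable n : nat.
Implicit Types (x y : pt n) (f : pt n -> bool) (i j : 'I_n) (t : nested n).

Lemma lit_upd i b x a : lit i b (upd x i a) = (a == b).
Proof. by rewrite /lit upd_eq; case: a b => [] []. Qed.

Lemma lit_upd_neg i b x : lit i b (upd x i (~~ b)) = false.
Proof. by rewrite lit_upd; case: b. Qed.

Lemma lit_compl i b x : lit i b (compl x) = ~~ lit i b x.
Proof. by rewrite /lit complE; case: b; rewrite ?negbK. Qed.

Fixpoint ndual t : nested n :=
  match t with
  | NLit i b => NLit i b
  | NOr i b t' => NAnd i b (ndual t')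
  | NAnd i b t' => NOr i b (ndual t')
  end.

Lemma neval_ndual t x : neval (ndual t) x = ~~ neval t (compl x).
Proof.
by elim: t => [i b|i b t IH|i b t IH] /=; rewrite ?IH lit_compl ?negb_or ?negb_and ?negbK.
Qed.

Lemma nvars_ndual t : nvars (ndual t) = nvars t.
Proof. by elim: t => //= i b t ->. Qed.

Lemma nwf_ndual t : nwf (ndual t) = nwf t.
Proof. by elim: t => //= i b t ->; rewrite nvars_ndual. Qed.

Lemma neval_upd t x i a : i \notin nvars t -> neval t (upd x i a) = neval t x.
Proof.
elim: t => [j b|j b t IH|j b t IH] /=; rewrite !inE ?negb_or.
- by move=> ij; rewrite /lit upd_neq 1?eq_sym.
- by case/andP=> ij ti; rewrite /lit upd_neq 1?eq_sym // IH.
- by case/andP=> ij ti; rewrite /lit upd_neq 1?eq_sym // IH.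
Qed.

Lemma neval_nonconst t : nwf t -> (exists x, ~~ neval t x) /\ (exists x, neval t x).
Proof.
elim: t => [i b|i b t IH|i b t IH] /=.
- by split; [exists (upd zero i (~~ b))|exists (upd zero i b)]; rewrite lit_upd; case: b.
- case/andP=> ti /IH[[x tx] [y ty]]; split.
    by exists (upd x i (~~ b)); rewrite lit_upd neval_upd //; case: b.
  by exists (upd y i b); rewrite lit_upd eqxx.
- case/andP=> ti /IH[[x tx] [y ty]]; split.
    by exists (upd x i (~~ b)); rewrite lit_upd; case: b.
  by exists (upd y i b); rewrite lit_upd eqxx neval_upd.
Qed.

Lemma neval_relevant t j : nwf t -> j \in nvars t -> relevant (neval t) j.
Proof.
elim: t => [i b|i b t IH|i b t IH] /=.
- move=> _; rewrite inE => /eqP ->; apply/relevantP; exists zero.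
  by rewrite !lit_upd; case: b.
- case/andP=> ti wf_t; rewrite inE => /orP[/eqP ->|tj].
    case: (neval_nonconst wf_t) => -[x tx] _; apply/relevantP; exists x.
    by rewrite !lit_upd !neval_upd // (negbTE tx); case: b.
  apply: (relevant_restrict (v := i) (a := ~~ b)).
  rewrite (eq_relevant _ (g := neval t)) ?IH //.
  by move=> x; rewrite /restrict /= lit_upd neval_upd //; case: b.
- case/andP=> ti wf_t; rewrite inE => /orP[/eqP ->|tj].
    case: (neval_nonconst wf_t) => _ [x tx]; apply/relevantP; exists x.
    by rewrite !lit_upd !neval_upd // tx; case: b.
  apply: (relevant_restrict (v := i) (a := b)).
  rewrite (eq_relevant _ (g := neval t)) ?IH //.
  by move=> x; rewrite /restrict /= lit_upd eqxx neval_upd.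
Qed.

End NestedFormulas.

Section LinearReadOnce.
Variable n : nat.
Implicit Types (x : pt n) (f g : pt n -> bool) (i : 'I_n) (t : nested n).

Lemma positive_flip f x i a : positive f ->
  f (upd x i a) -> ~~ f (upd x i (~~ a)) -> a.
Proof. by move=> Pf; case: a => // /(positive_upd Pf) ->. Qed.

Lemma card_extremal_points_nested t f : nwf t -> positive f -> f =1 neval t ->
  #|extremal_points f| = #|relevant_vars f|.+1.
Proof.
elim: t f => [i b|i b t IH|i b t IH] f /= wf_t Pf ft.
- have bT : b.
    apply: (positive_flip (x := zero) (i := i) Pf);
    by rewrite !ft /= ?lit_upd_neg ?lit_upd ?eqxx.
  have f1 x : f (upd x i true) by rewrite ft /= lit_upd bT.
  have h0 x : restrict f i false x = false by rewrite /restrict ft /= lit_upd bT.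
  have hn : exists x, ~~ restrict f i false x by exists zero; rewrite h0.
  rewrite (card_extremal_points_absorbing Pf f1 hn) (card_relevant_vars_absorbing f1 hn).
  by rewrite (extremal_points_const h0) (relevant_vars_const h0) cards1 cards0.
- case/andP: wf_t => ti wf_t; case: (neval_nonconst wf_t) => -[x0 tx0] _.
  have bT : b.
    apply: (positive_flip (x := x0) (i := i) Pf); rewrite !ft /= ?lit_upd_neg ?lit_upd ?eqxx //.
    by rewrite neval_upd.
  have f1 x : f (upd x i true) by rewrite ft /= lit_upd bT.
  have ht x : restrict f i false x = neval t x by rewrite /restrict ft /= lit_upd bT neval_upd.
  have hn : exists x, ~~ restrict f i false x by exists x0; rewrite ht.
  rewrite (card_extremal_points_absorbing Pf f1 hn) (card_relevant_vars_absorbing f1 hn).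
  by rewrite (IH _ wf_t (positive_restrict Pf false) ht).
- case/andP: wf_t => ti wf_t; case: (neval_nonconst wf_t) => _ [x0 tx0].
  have bT : b.
    apply: (positive_flip (x := x0) (i := i) Pf);
    by rewrite !ft /= ?lit_upd_neg ?lit_upd ?eqxx neval_upd.
  have f0 x : ~~ f (upd x i false) by rewrite ft /= lit_upd bT.
  have ht x : restrict f i true x = neval t x by rewrite /restrict ft /= lit_upd bT neval_upd.
  have hn : exists x, restrict f i true x by exists x0; rewrite ht.
  case: (card_annihilating Pf f0 hn) => -> ->.
  by rewrite (IH _ wf_t (positive_restrict Pf true) ht).
Qed.

Lemma card_extremal_points_lro f : positive f -> lro f ->
  #|extremal_points f| = #|relevant_vars f|.+1.
Proof.
move=> Pf [[c fc]|[t [wf_t ft]]]; last exact: card_extremal_points_nested wf_t Pf ft.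
by rewrite (extremal_points_const fc) (relevant_vars_const fc) cards1 cards0.
Qed.

Lemma lro_dual f : lro (dual f) -> lro f.
Proof.
case=> [/const_fun_dual|[t [wf_t ft]]]; first by left.
right; exists (ndual t); rewrite nwf_ndual; split=> // x.
by rewrite neval_ndual -ft /dual complK negbK.
Qed.

Lemma lro_absorbing f i : (forall x, f (upd x i true)) ->
  lro (restrict f i false) -> lro f.
Proof.
move=> f1; have fE x : f x = x i || restrict f i false x.
  case: (boolP (x i)) => xi /=; first by rewrite -(upd_id xi) f1.
  by rewrite /restrict upd_id ?(negbTE xi).
case=> [[[] hc]|[t [wf_t ht]]].
- by left; exists true => x; rewrite fE hc orbT.
- by right; exists (NLit i true); split=> // x; rewrite fE hc orbF.
have ti : i \notin nvars t.
  apply/negP => /(neval_relevant wf_t); rewrite -(eq_relevant _ ht).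
  by apply/negP/ignores_irrelevant/restrict_ignores.
by right; exists (NOr i true t); rewrite /= ti wf_t; split=> // x; rewrite fE ht.
Qed.

Lemma lro_of_tight f : positive f ->
  #|extremal_points f| = #|relevant_vars f|.+1 -> lro f.
Proof.
have [k] := ubnP #|relevant_vars f|; elim: k f => // k IH f lt_fk Pf tight.
have absorbed g i : positive g -> #|relevant_vars g| = #|relevant_vars f| ->
    #|extremal_points g| = #|relevant_vars g|.+1 -> (forall x, g (upd x i true)) -> lro g.
  move=> Pg rel_g tight_g g1; suff : lro (restrict g i false) by apply: lro_absorbing.
  case: (pickP (fun x => ~~ restrict g i false x)) => [x0 hx0|h1]; last first.
    by left; exists true => x; apply/negbFE/h1.
  have hn : exists x, ~~ restrict g i false x by exists x0.
  move: tight_g; rewrite (card_extremal_points_absorbing Pg g1 hn).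
  have rel_h := card_relevant_vars_absorbing g1 hn; rewrite rel_h => -[tight_h].
  by apply: IH (positive_restrict Pg false) tight_h; lia.
case: (extremal_spec_positive Pf).2 => // [|[i [[] [[] fc]]]]; first by left.
- exact: absorbed f i Pf erefl tight fc.
- left; exists false => x; apply/negbTE; move: x.
  by apply: (positive_restrict1_false (i := i) Pf) => y; rewrite fc.
- by left; exists true; apply: (positive_restrict0_true (i := i) Pf).
- apply/lro_dual/(absorbed _ i (dual_positive Pf)).
  + by rewrite relevant_vars_dual.
  + by rewrite card_extremal_points_dual relevant_vars_dual.
  + by move=> x; rewrite /dual upd_compl -/(restrict f i false (compl x)) fc.
Qed.

End LinearReadOnce.

Theorem mainTheorem3 (n : nat) (f : pt n -> bool) :
  positive f -> canalyzing f ->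
  (#|relevant_vars f|.+1 <= #|extremal_points f|)%N /\
  (#|extremal_points f| = #|relevant_vars f|.+1 <-> lro f).
Proof.
move=> Pf _; split; first exact: (extremal_spec_positive Pf).1.
by split; [apply: lro_of_tight | apply: card_extremal_points_lro].
Qed.
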